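(* Let $i\in I$ and suppose there is $k\in I$ with $C_{k,i}<-1$. Then for every $w\in W$ the monomial $Y_{w(\omega_i),1}:=T_w(Y_{i,1})$ is a Laurent monomial in the elements $W_{j,b}$, $j\in I$, $b\in\mathbb{C}^\times$.
   Context: Let $\mathfrak{g}$ be a finite-dimensional simple complex Lie algebra with Dynkin index set $I$, Cartan matrix $C=(C_{i,j})$, symmetrizing integers $d_i$ (relatively prime, $(d_iC_{i,j})$ symmetric), lacing number $d=\max_i d_i$, fundamental weights $\omega_i$ and Weyl group $W$. Fix $q\in\mathbb{C}^\times$ not a root of unity, $q_i=q^{d_i}$. Let $\mathcal{Y}=\mathbb{Z}[Y_{i,a}^{\pm1}]_{i\in I,a\in\mathbb{C}^\times}$ and $A_{i,a}=Y_{i,aq_i^{-1}}Y_{i,aq_i}\big(\prod_{C_{j,i}=-1}Y_{j,a}\prod_{C_{j,i}=-2}Y_{j,aq^{-1}}Y_{j,aq}\prod_{C_{j,i}=-3}Y_{j,aq^{-2}}Y_{j,a}Y_{j,aq^2}\big)^{-1}$. Chari operators: ring automorphisms $T_i$ of $\mathcal{Y}$ with $T_i(Y_{i,a})=Y_{i,a}A_{i,aq_i}^{-1}$, $T_i(Y_{j,a})=Y_{j,a}$ ($j\ne i$); they satisfy the braid relations and $T_w:=T_{i_1}\cdots T_{i_k}$ for a reduced decomposition $w=s_{i_1}\cdots s_{i_k}$. $W_{j,b}$ denotes $Y_{j,b}$ if $d_j=d$, $Y_{j,bq^{-1}}Y_{j,bq}$ if $d_j=d-1$, $Y_{j,bq^{-2}}Y_{j,b}Y_{j,bq^2}$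 if $d_j=d-2$. *)

From HB Require Import structures.
From mathcomp Require Import all_boot all_order all_algebra.
From mathcomp Require Import reals.
From mathcomp Require Import complex.
From mathcomp Require Import freeg.

Set Implicit Arguments.
Unset Strict Implicit.
Unset Printing Implicit Defensive.

Import Order.TTheory GRing.Theory Num.Theory.
Local Open Scope ring_scope.

(* Cartan matrix of a finite-dimensional simple complex Lie algebra,   *)
(* with index set I = 'I_n, together with its symmetrizing integers d. *)
Definition simple_cartan (n : nat) (C : 'M[int]_n) (d : 'I_n -> nat) : Prop :=
     (0 < n)%N
  /\ (forall i, C i i = 2)
  /\ (forall i j, i != j -> C i j <= 0)
  /\ (forall i j, C i j = 0 <-> C j i = 0)
  /\ (forall i, (0 < d i)%N)
  /\ (forall i j, (d i)%:Z * C i j = (d j)%:Z * C j i)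
  /\ (\big[gcdn/0%N]_(i < n) d i = 1%N)
  /\ (forall x : 'I_n -> rat, (exists i, x i != 0) ->
         0 < \sum_(i < n) \sum_(j < n) x i * ((d i)%:R * (C i j)%:~R) * x j)
  /\ (forall S : {set 'I_n},
         (forall i j, i \in S -> j \notin S -> C i j = 0) ->
         S = set0 \/ S = setT).

Definition lacing (n : nat) (d : 'I_n -> nat) : nat := (\max_(i < n) d i)%N.

(* Weyl group: generated by the simple reflections s_i acting on the   *)
(* weight lattice (coordinates w.r.t. the fundamental weights),        *)
(*   s_i(lambda) = lambda - lambda_i alpha_i,                          *)
(*   alpha_i = sum_j C_{j,i} omega_j.                                  *)
Definition sref (n : nat) (C : 'M[int]_n) (i : 'I_n) (l : 'I_n -> int) : 'I_n -> int :=
  fun j => l j - l i * C j i.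

Definition wact (n : nat) (C : 'M[int]_n) (s : seq 'I_n) : ('I_n -> int) -> ('I_n -> int) :=
  foldr (fun i f => fun l => sref C i (f l)) id s.

Definition reduced_word (n : nat) (C : 'M[int]_n) (s : seq 'I_n) : Prop :=
  forall t : seq 'I_n, (forall l j, wact C t l j = wact C s l j) -> (size s <= size t)%N.

(* Laurent monomials in the Y_{i,a} : free abelian group on I x C      *)
(* (written additively: monomial product = +, inverse = -).           *)
Definition Mon (R : realType) (n : nat) := {freeg ('I_n * R[i]) / int}.

Definition Ym (R : realType) (n : nat) (j : 'I_n) (a : R[i]) : Mon R n := << (j, a) >>.

Definition Am (R : realType) (n : nat) (C : 'M[int]_n) (d : 'I_n -> nat) (q : R[i])
    (i : 'I_n) (a : R[i]) : Mon R n :=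
  let qi := q ^+ d i in
  Ym i (a / qi) + Ym i (a * qi)
  - ( \sum_(j < n | C j i == -1) Ym j a
    + \sum_(j < n | C j i == -2) (Ym j (a / q) + Ym j (a * q))
    + \sum_(j < n | C j i == -3) (Ym j (a / q ^+ 2) + Ym j a + Ym j (a * q ^+ 2))).

Definition Tchari (R : realType) (n : nat) (C : 'M[int]_n) (d : 'I_n -> nat) (q : R[i])
    (i : 'I_n) : Mon R n -> Mon R n :=
  fglift (fun ja : 'I_n * R[i] =>
    if ja.1 == i then Ym ja.1 ja.2 - Am C d q i (ja.2 * q ^+ d i)
    else Ym ja.1 ja.2 : Mon R n).

Definition Tword (R : realType) (n : nat) (C : 'M[int]_n) (d : 'I_n -> nat) (q : R[i])
    (s : seq 'I_n) : Mon R n -> Mon R n :=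
  foldr (fun i f => fun m => Tchari C d q i (f m)) id s.

Definition Wm (R : realType) (n : nat) (d : 'I_n -> nat) (q : R[i])
    (j : 'I_n) (b : R[i]) : Mon R n :=
  if d j == lacing d then Ym j b
  else if (d j).+1 == lacing d then Ym j (b / q) + Ym j (b * q)
  else if (d j).+2 == lacing d then Ym j (b / q ^+ 2) + Ym j b + Ym j (b * q ^+ 2)
  else 0.

Definition W_laurent (R : realType) (n : nat) (d : 'I_n -> nat) (q : R[i]) (m : Mon R n) : Prop :=
  exists s : seq ('I_n * R[i] * int),
    all (fun x => x.1.2 != 0) s /\
    m = \sum_(x <- s) x.2 *: Wm d q x.1.1 x.1.2.

From Pilot Require Import Defs.
From HB Require Import structures.
From mathcomp Require Import all_boot all_order all_algebra.
From mathcomp Require Import reals complex freeg.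
From mathcomp Require Import ring zify.
Set Implicit Arguments.
Unset Strict Implicit.
Unset Printing Implicit Defensive.

Import Order.TTheory GRing.Theory Num.Theory.
Local Open Scope ring_scope.

(* The Laurent monomials in the W_{j,b} form a subgroup, so it suffices that
   Y_{i,1} = W_{i,1} and that every T_j maps each W_{k,b} into that subgroup.
   The first holds because a vertex receiving a multiple bond C_{k,i} < -1 is
   long.  For the second, T_j fixes W_{k,b} when k <> j, and T_j(W_{j,b}) is
   W_{j,b q_j^2}^{-1} times one factor per neighbour of j; these factors regroup
   into W's because in finite type every d_j is either the lacing number or 1.
   That dichotomy holds because the Dynkin diagram is connected and has at most
   one multiple bond: a chain of simple bonds joining two multiple bonds carries
   a nonzero vector z >= 0 with (C z)_i <= 0 on its support, contradicting the
   positive definiteness of the symmetrized Cartan matrix. *)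

Section CartanMatrix.
Variables (n : nat) (C : 'M[int]_n) (d : 'I_n -> nat).
Hypothesis C_diag : forall j, C j j = 2.
Hypothesis C_offdiag : forall j k, j != k -> C j k <= 0.
Hypothesis d_gt0 : forall j, (0 < d j)%N.

Definition cartan_form (z : 'I_n -> int) : int :=
  \sum_i \sum_l z i * ((d i)%:Z * C i l) * z l.

Hypothesis cartan_form_gt0 :
  forall z : 'I_n -> int, (exists i, z i != 0) -> 0 < cartan_form z.

Definition cartan_row i (z : 'I_n -> int) : int := \sum_l C i l * z l.

Lemma cartan_row_le_sub (T : seq 'I_n) (z : 'I_n -> int) i :
  uniq T -> i \in T -> (forall l, 0 <= z l) ->
  cartan_row i z <= \sum_(l <- T) C i l * z l.
Proof.
move=> uT iT z_ge0; rewrite /cartan_row (big_uniq _ uT) (bigID (mem T)) /=.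
rewrite -[leRHS]addr0 lerD2l; apply: sumr_le0 => l lT.
have il : i != l by apply: contraNneq lT => <-.
by rewrite mulr_le0_ge0 ?C_offdiag.
Qed.

(* [cartan_form z] is the sum of the terms [z i * d i * (C z)_i]. *)
Lemma nonneg_cartan_row_le0_eq0 (z : 'I_n -> int) :
  (forall i, 0 <= z i) -> (forall i, 0 < z i -> cartan_row i z <= 0) ->
  forall i, z i = 0.
Proof.
move=> z_ge0 row_le0 i; apply/eqP/negP => /negP nz.
have := cartan_form_gt0 (ex_intro _ i nz); apply/negP; rewrite -leNgt.
apply: sumr_le0 => j _; under eq_bigr do rewrite -!mulrA.
rewrite -mulr_sumr -mulr_sumr.
have := z_ge0 j; rewrite le_eqVlt => /orP [/eqP <-|zj]; first by rewrite mul0r.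
rewrite mulr_ge0_le0 ?(ltW zj) // mulr_ge0_le0 //.
exact: row_le0.
Qed.

Lemma cartan_bond_le3 j k : j != k -> C j k * C k j <= 3.
Proof.
move=> jk; rewrite leNgt; apply/negP => bond4.
have kj : k != j by rewrite eq_sym.
pose z l : int := if l == j then 2 else if l == k then - C k j else 0.
have zj : z j = 2 by rewrite /z eqxx.
have zk : z k = - C k j by rewrite /z eqxx (negPf kj).
have z_ge0 l : 0 <= z l.
  by rewrite /z; case: ifP => // _; case: ifP => // _; rewrite oppr_ge0 C_offdiag.
have uT : uniq [:: j; k] by rewrite /= inE jk.
have row_le0 l : 0 < z l -> cartan_row l z <= 0.
  have [->|lj] := eqVneq l j => [_|].
    apply: le_trans (cartan_row_le_sub uT _ z_ge0) _; first by rewrite inE eqxx.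
    by rewrite !big_cons big_nil zj zk C_diag; lia.
  have [->|lk] := eqVneq l k => [_|]; last by rewrite /z (negPf lj) (negPf lk).
  apply: le_trans (cartan_row_le_sub uT _ z_ge0) _; first by rewrite !inE eqxx orbT.
  by rewrite !big_cons big_nil zj zk C_diag; lia.
by have := nonneg_cartan_row_le0_eq0 z_ge0 row_le0 j; rewrite zj.
Qed.

Section MultipleBondChain.
Variables (s : seq 'I_n) (x0 : 'I_n).
Local Notation x k := (nth x0 s k).
Local Notation L := (size s).
Hypothesis s_uniq : uniq s.
Hypothesis s_size : (2 < L)%N.
Hypothesis s_inner_simple : forall k, (0 < k)%N -> (k.+2 < L)%N ->
  C (x k) (x k.+1) = -1 /\ C (x k.+1) (x k) = -1.
Hypothesis s_head : C (x 0%N) (x 1%N) < 0.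
Hypothesis s_head_multiple : 2 <= C (x 0%N) (x 1%N) * C (x 1%N) (x 0%N).
Hypothesis s_last : C (x L.-1) (x L.-2) < 0.
Hypothesis s_last_multiple : 2 <= C (x L.-1) (x L.-2) * C (x L.-2) (x L.-1).

(* Against these weights every row of [C] indexed by the chain is nonpositive. *)
Definition chain_weight k : int :=
  if k == 0%N then - C (x 0%N) (x 1%N)
  else if k == L.-1 then - C (x L.-1) (x L.-2) else 2.

Lemma chain_weight0 : chain_weight 0%N = - C (x 0%N) (x 1%N).
Proof. by []. Qed.

Lemma chain_weight_last : chain_weight L.-1 = - C (x L.-1) (x L.-2).
Proof. by rewrite /chain_weight; case: eqP => [|_]; [lia|rewrite eqxx]. Qed.

Lemma chain_weight_inner k : (0 < k)%N -> (k < L.-1)%N -> chain_weight k = 2.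
Proof.
by move=> k_gt0 k_lt; rewrite /chain_weight; case: eqP => [|_]; [lia|case: eqP => //; lia].
Qed.

Lemma chain_weight_ge0 k : 0 <= chain_weight k.
Proof. by rewrite /chain_weight; case: eqP => _; [lia|case: eqP => _; lia]. Qed.

Lemma chain_pred_term k : (0 < k)%N -> (k < L.-1)%N ->
  C (x k) (x k.-1) * chain_weight k.-1 <= -2.
Proof.
move=> k_gt0 k_lt; have [k1|k1] := eqVneq k 1%N.
  by rewrite k1 /= chain_weight0; nia.
rewrite chain_weight_inner; try lia.
have [_ e] := @s_inner_simple k.-1 ltac:(lia) ltac:(lia).
by rewrite prednK // in e; rewrite e.
Qed.

Lemma chain_succ_term k : (0 < k)%N -> (k < L.-1)%N ->
  C (x k) (x k.+1) * chain_weight k.+1 <= -2.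
Proof.
move=> k_gt0 k_lt; have [kL|kL] := eqVneq k.+1 L.-1.
  have ek : k = L.-2 by lia.
  by rewrite ek in kL *; rewrite kL chain_weight_last; nia.
rewrite chain_weight_inner; try lia.
by have [-> _] := @s_inner_simple k k_gt0 ltac:(lia).
Qed.

Definition chain_vector i : int := if i \in s then chain_weight (index i s) else 0.

Lemma chain_vector_nth k : (k < L)%N -> chain_vector (x k) = chain_weight k.
Proof. by move=> kL; rewrite /chain_vector mem_nth // index_uniq. Qed.

Lemma chain_vector_ge0 i : 0 <= chain_vector i.
Proof. by rewrite /chain_vector; case: ifP => _; rewrite ?chain_weight_ge0. Qed.

Lemma chain_nth_uniq (ks : seq nat) : uniq ks -> all (fun k => k < L)%N ks ->
  uniq [seq x k | k <- ks].
Proof.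
move=> uks ksL; rewrite map_inj_in_uniq // => a b aks bks.
by move/eqP; rewrite nth_uniq // ?(allP ksL) // => /eqP.
Qed.

Lemma chain_row_le k (ks : seq nat) :
  uniq ks -> all (fun l => l < L)%N ks -> k \in ks ->
  cartan_row (x k) chain_vector <= \sum_(l <- ks) C (x k) (x l) * chain_weight l.
Proof.
move=> uks ksL kks.
apply: le_trans (cartan_row_le_sub (chain_nth_uniq uks ksL) _ chain_vector_ge0) _.
  exact: map_f.
rewrite big_map big_seq_cond [leRHS]big_seq_cond; apply: ler_sum => l /andP [lks _].
by rewrite chain_vector_nth ?(allP ksL).
Qed.

Lemma chain_row_le0 i : 0 < chain_vector i -> cartan_row i chain_vector <= 0.
Proof.
move=> zi; have iS : i \in s by apply: contraTT zi; rewrite /chain_vector => /negPf ->.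
have kL : (index i s < L)%N by rewrite index_mem.
rewrite -(nth_index x0 iS); move: (index i s) kL => k kL.
have [->|k_gt0] := posnP k.
  apply: le_trans (@chain_row_le 0%N [:: 0%N; 1%N] _ _ _) _ => //=; first by lia.
  by rewrite !big_cons big_nil chain_weight0 chain_weight_inner ?C_diag; lia.
have [kL1|k_lt] := eqVneq k L.-1.
  rewrite kL1; apply: le_trans (@chain_row_le L.-1 [:: L.-1; L.-2] _ _ _) _ => /=.
  - by rewrite inE andbT; lia.
  - by lia.
  - by rewrite inE eqxx.
  by rewrite !big_cons big_nil chain_weight_last chain_weight_inner ?C_diag; lia.
have {}k_lt : (k < L.-1)%N by lia.
apply: le_trans (@chain_row_le k [:: k.-1; k; k.+1] _ _ _) _ => /=.
- by rewrite !inE andbT; lia.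
- by lia.
- by rewrite !inE eqxx orbT.
rewrite !big_cons big_nil (chain_weight_inner k_gt0 k_lt) C_diag.
have := chain_pred_term k_gt0 k_lt; have := chain_succ_term k_gt0 k_lt; lia.
Qed.

Lemma no_multiple_bond_chain : False.
Proof.
have := nonneg_cartan_row_le0_eq0 chain_vector_ge0 chain_row_le0 (x 0%N).
by rewrite chain_vector_nth ?chain_weight0; lia.
Qed.
End MultipleBondChain.

Hypothesis C_eq0_sym : forall j k, C j k = 0 <-> C k j = 0.
Hypothesis d_sym : forall j k, (d j)%:Z * C j k = (d k)%:Z * C k j.

Lemma cartan_neg_pair u v : u != v -> C u v != 0 -> C u v < 0 /\ C v u < 0.
Proof.
move=> uv nz; have nz' : C v u != 0 by apply: contra nz => /eqP/C_eq0_sym ->.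
rewrite !lt_neqAle nz nz' !C_offdiag //; by rewrite eq_sym.
Qed.

Lemma d_le_lacing j : (d j <= lacing d)%N.
Proof. exact: leq_bigmax. Qed.

Lemma simple_bond_long j k : d j = lacing d -> C k j = -1 -> d k = lacing d.
Proof.
move=> dj Ckj; have kj : k != j by apply/eqP => kj; move: Ckj; rewrite kj C_diag.
have Ckj_neq0 : C k j != 0 by rewrite Ckj.
have [_ Cjk_lt0] := cartan_neg_pair kj Ckj_neq0.
have := d_sym k j; have := d_le_lacing k; rewrite Ckj; nia.
Qed.

Definition simple_bond u v := (C u v == -1) && (C v u == -1).

Definition simple_bond_avoiding a u v := simple_bond u v && (v != a).

Lemma simple_bond_d u v : simple_bond u v -> d u = d v.
Proof. by case/andP => /eqP Cuv /eqP Cvu; have := d_sym u v; rewrite Cuv Cvu; lia. Qed.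

Lemma connect_avoiding_d a u v : connect (simple_bond_avoiding a) u v -> d v = d u.
Proof.
have closed_d : closed (simple_bond_avoiding a) [pred w | d w == d u].
  by move=> x y /andP [/simple_bond_d dxy _]; rewrite !inE dxy.
by move=> uv; have := closed_connect closed_d uv; rewrite !inE eqxx => /esym/eqP.
Qed.

Lemma path_avoiding_notin a b p : path (simple_bond_avoiding a) b p -> a \notin p.
Proof.
elim: p b => [|c p IH] b //= /andP [/andP [_ ca] /IH]; by rewrite inE negb_or eq_sym ca.
Qed.

(* If [a]-[b] is a multiple bond, the vertices reached from [b] by simple bonds
   avoiding [a] are joined to no other vertex but [a]: a bond leaving them would
   either extend the component or close a chain between two multiple bonds. *)
Lemma simple_component_isolated a b v w :
  a != b -> C a b < 0 -> 2 <= C a b * C b a ->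
  connect (simple_bond_avoiding a) b v -> ~~ connect (simple_bond_avoiding a) b w ->
  w != a -> C v w = 0.
Proof.
move=> ab Cab_lt0 ab_multiple bv not_bw wa; apply/eqP/negP => /negP vw_neq0.
have vw : v != w by apply: contraNneq not_bw => <-.
have [Cvw_lt0 Cwv_lt0] := cartan_neg_pair vw vw_neq0.
have vw_multiple : 2 <= C w v * C v w.
  have [vw_simple|] := boolP (simple_bond v w).
    move/negP: not_bw; case; apply: connect_trans bv (connect1 _).
    by rewrite /simple_bond_avoiding vw_simple.
  by rewrite /simple_bond negb_and => /orP [/eqP|/eqP]; nia.
case/connectP: bv => p bp; case: (shortenP bp) => p' bp' p'_uniq _ v_last.
have a_notin : a \notin b :: p' by rewrite inE negb_or ab (path_avoiding_notin bp').
have w_notin : w \notin b :: p'.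
  by apply: contra not_bw => /(path_connect bp').
pose s := a :: (b :: p') ++ [:: w].
have s_size : size s = (size p').+3 by rewrite /s /= size_cat /= addn1.
apply: (@no_multiple_bond_chain s a) => //.
- rewrite /s cons_uniq mem_cat negb_or a_notin inE eq_sym wa cat_uniq p'_uniq /=.
  by rewrite (negPf w_notin).
- by rewrite s_size.
- move=> [|k] // _; rewrite s_size !ltnS => kS.
  move/pathP: bp' => /(_ a k kS) /andP [/andP [/eqP Ck /eqP Ck'] _].
  by rewrite /s /= -cat_cons !nth_cat /= !ltnS kS (ltnW kS).
- by rewrite s_size /s /= nth_cat ltnn subnn -cat_cons nth_cat /= ltnSn -last_nth -v_last.
- by rewrite s_size /s /= nth_cat ltnn subnn -cat_cons nth_cat /= ltnSn -last_nth -v_last.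
Qed.

Hypothesis C_indecomposable : forall S : {set 'I_n},
  (forall i j, i \in S -> j \notin S -> C i j = 0) -> S = set0 \/ S = setT.

Lemma lacing_eq v : (forall u, d u <= d v)%N -> lacing d = d v.
Proof.
by move=> d_le; apply/eqP; rewrite eqn_leq d_le_lacing andbT; apply/bigmax_leqP.
Qed.

Lemma d_values_multiple_bond a b : a != b -> C a b < 0 -> 2 <= C a b * C b a ->
  forall v, d v = d a \/ d v = d b.
Proof.
move=> ab Cab_lt0 ab_multiple v.
have ba : b != a by rewrite eq_sym.
have [_ Cba_lt0] := cartan_neg_pair ab (ltr0_neq0 Cab_lt0).
pose S := [set u | connect (simple_bond_avoiding a) b u
                || connect (simple_bond_avoiding b) a u].
have : S = setT.
  case: (C_indecomposable (S := S)) => [u w|S0|//].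
    rewrite !inE negb_or => /orP [bu|au] /andP [not_bw not_aw].
      apply: simple_component_isolated ab _ _ bu not_bw _ => //.
      by apply: contraNneq not_aw => ->; rewrite connect0.
    apply: simple_component_isolated ba _ _ au not_aw _ => //; first by rewrite mulrC.
    by apply: contraNneq not_bw => ->; rewrite connect0.
  by have := in_set0 a; rewrite -S0 inE connect0 orbT.
by move/setP/(_ v); rewrite !inE => /orP [|] /connect_avoiding_d; [right|left].
Qed.

Lemma d_const_simply_laced u v :
  (forall a b, a != b -> C a b * C b a < 2) -> d v = d u.
Proof.
move=> simply_laced; pose S := [set w | d w == d u].
have : S = setT.
  case: (C_indecomposable (S := S)) => [i k|S0|//].
    rewrite !inE => /eqP di dk; apply/eqP/negP => /negP Cik_neq0.
    have ik : i != k by apply: contraNneq dk => <-; rewrite di.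
    have [Cik_lt0 Cki_lt0] := cartan_neg_pair ik Cik_neq0.
    have := simply_laced _ _ ik => bond_lt2.
    have ik_simple : simple_bond i k by apply/andP; split; apply/eqP; nia.
    by move/eqP: dk; rewrite -(simple_bond_d ik_simple).
  by have := in_set0 u; rewrite -S0 inE eqxx.
by move/setP/(_ v); rewrite !inE => /eqP.
Qed.

Hypothesis d_gcd : \big[gcdn/0%N]_(i < n) d i = 1%N.

Lemma common_divisor_d_eq1 m : (forall v, m %| d v)%N -> m = 1%N.
Proof. by move=> m_dvd; apply/eqP; rewrite -dvdn1 -d_gcd; apply/dvdn_biggcdP. Qed.

Lemma lacing_dichotomy_two_values a b r : (r = 2 \/ r = 3)%N ->
  (forall v, d v = d a \/ d v = d b) -> d a = (r * d b)%N ->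
  forall j, d j = lacing d \/ (d j = 1 /\ (lacing d = 2 \/ lacing d = 3))%N.
Proof.
move=> r23 d_ab da j.
have db1 : d b = 1%N.
  by apply: common_divisor_d_eq1 => v; case: (d_ab v) => ->; rewrite ?da ?dvdn_mull.
rewrite db1 muln1 in da.
have -> : lacing d = r.
  by rewrite -da; apply: lacing_eq => u; case: (d_ab u) => ->; lia.
by case: (d_ab j) => ->; [left|right].
Qed.

Lemma lacing_dichotomy j :
  d j = lacing d \/ (d j = 1 /\ (lacing d = 2 \/ lacing d = 3))%N.
Proof.
case: (boolP [exists a, exists b, (a != b) && (2 <= C a b * C b a)]); last first.
  move=> no_multiple; have d_const v : d v = d j.
    apply: d_const_simply_laced => a b ab; rewrite ltNge.
    apply: contra no_multiple => ab_multiple.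
    by apply/existsP; exists a; apply/existsP; exists b; rewrite ab.
  have dj1 : d j = 1%N by apply: common_divisor_d_eq1 => v; rewrite d_const.
  by left; rewrite (lacing_eq (v := j)) // => u; rewrite d_const.
case/existsP => a /existsP [b /andP [ab ab_multiple]].
have Cab_neq0 : C a b != 0 by apply: contraTneq ab_multiple => ->; rewrite mul0r.
have [Cab_lt0 Cba_lt0] := cartan_neg_pair ab Cab_neq0.
have d_ab := d_values_multiple_bond ab Cab_lt0 ab_multiple.
have := cartan_bond_le3 ab; have := d_sym a b; have := d_gt0 a; have := d_gt0 b.
move=> da_gt0 db_gt0 dab ab_le3.
have [[r r23 da]|[r r23 db]] : (exists2 r, (r = 2 \/ r = 3)%N & d a = (r * d b)%N) \/
    (exists2 r, (r = 2 \/ r = 3)%N & d b = (r * d a)%N).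
- have : (C a b = -1 /\ (C b a = -2 \/ C b a = -3)) \/
      (C b a = -1 /\ (C a b = -2 \/ C a b = -3)) by nia.
  case=> [[Cab [] Cba]|[Cba [] Cab]]; rewrite Cab Cba in dab;
    [left; exists 2%N|left; exists 3%N|right; exists 2%N|right; exists 3%N]; lia.
- exact: lacing_dichotomy_two_values r23 d_ab da j.
- by apply: lacing_dichotomy_two_values r23 _ db j => v; case: (d_ab v); [right|left].
Qed.

Lemma multiple_bond_short j k : C k j <= -2 ->
  [/\ d k = 1%N, d j = lacing d & (lacing d)%:Z = - C k j].
Proof.
move=> Ckj_le; have kj : k != j by apply: contraTneq Ckj_le => ->; rewrite C_diag.
have Ckj_neq0 : C k j != 0 by lia.
have [_ Cjk_lt0] := cartan_neg_pair kj Ckj_neq0.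
have := cartan_bond_le3 kj; have := d_sym k j; have := d_gt0 k.
move=> dk_gt0 dkj le3; have Cjk : C j k = -1 by nia.
have dj_ge : (2 * d k <= d j)%N by rewrite Cjk in dkj; nia.
have := lacing_dichotomy j; have := lacing_dichotomy k; rewrite Cjk in dkj.
by case=> [dk|[dk _]]; case=> [dj|[dj _]]; split; lia.
Qed.
End CartanMatrix.

HB.instance Definition _ (R : realType) (n : nat) (C : 'M[int]_n) (d : 'I_n -> nat)
    (q : R[i]) (j : 'I_n) :=
  GRing.isZmodMorphism.Build (Mon R n) (Mon R n) (Tchari C d q j) (lift_is_additive _).

Section ChariOperators.
Variables (R : realType) (n : nat) (C : 'M[int]_n) (d : 'I_n -> nat) (q : R[i]).
Hypothesis q_neq0 : q != 0.
Local Notation W_laurent := (W_laurent d q).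
Local Notation Wm := (Wm d q).
Local Notation T := (Tchari C d q).

Lemma W_laurent0 : W_laurent 0.
Proof. by exists [::]; rewrite big_nil. Qed.

Lemma W_laurentD m1 m2 : W_laurent m1 -> W_laurent m2 -> W_laurent (m1 + m2).
Proof.
case=> [s1 [s1_nz ->]] [s2 [s2_nz ->]].
by exists (s1 ++ s2); rewrite all_cat s1_nz s2_nz big_cat.
Qed.

Lemma W_laurentZ (k : int) m : W_laurent m -> W_laurent (k *: m).
Proof.
case=> s [s_nz ->]; exists [seq (x.1, k * x.2) | x <- s]; rewrite all_map.
by split=> //; rewrite big_map scaler_sumr; apply: eq_bigr => x _; rewrite scalerA.
Qed.

Lemma W_laurentB m1 m2 : W_laurent m1 -> W_laurent m2 -> W_laurent (m1 - m2).
Proof. by move=> Wm1 Wm2; rewrite -scaleN1r; apply/W_laurentD/W_laurentZ. Qed.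

Lemma W_laurent_sum (I : Type) (r : seq I) (P : pred I) (F : I -> Mon R n) :
  (forall i, P i -> W_laurent (F i)) -> W_laurent (\sum_(i <- r | P i) F i).
Proof. by move=> W_F; apply: big_ind => //; [exact: W_laurent0|exact: W_laurentD]. Qed.

Lemma W_laurent_Wm j b : b != 0 -> W_laurent (Wm j b).
Proof. by move=> b_neq0; exists [:: (j, b, 1)]; rewrite /= b_neq0 big_seq1 scale1r. Qed.

Lemma Tchari_Ym j k a :
  T j (Ym k a) = if k == j then Ym k a - Am C d q j (a * q ^+ d j) else Ym k a.
Proof. by rewrite /Tchari /Ym liftU scale1r. Qed.

Lemma TchariD j : {morph T j : x y / x + y}.
Proof. exact: raddfD. Qed.

Lemma Tchari_Wm_id j k b : k != j -> T j (Wm k b) = Wm k b.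
Proof.
move=> kj; have T_Ym c : T j (Ym k c) = Ym k c by rewrite Tchari_Ym (negPf kj).
rewrite /Defs.Wm; do 3?case: ifP => _; by rewrite ?raddf0 ?TchariD ?T_Ym.
Qed.

Lemma W_laurent_Tchari_of_Wm j :
  (forall k b, b != 0 -> W_laurent (T j (Wm k b))) ->
  forall m, W_laurent m -> W_laurent (T j m).
Proof.
move=> W_TW m [s [s_nz ->]]; rewrite raddf_sum big_seq; apply: W_laurent_sum => x xs.
rewrite -[x.2]intz !scaler_int raddfMz -scaler_int; apply/W_laurentZ/W_TW.
exact: (allP s_nz).
Qed.

Definition Am_neighbour j k c : Mon R n :=
  if C k j == -1 then Ym k c
  else if C k j == -2 then Ym k (c / q) + Ym k (c * q)
  else if C k j == -3 then Ym k (c / q ^+ 2) + Ym k c + Ym k (c * q ^+ 2)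
  else 0.

Lemma Am_neighbourE j c : Am C d q j c =
  Ym j (c / q ^+ d j) + Ym j (c * q ^+ d j) - \sum_k Am_neighbour j k c.
Proof.
rewrite /Am; congr (_ - _).
rewrite !(big_mkcond (fun k => C k j == _)) -!big_split /=; apply: eq_bigr => k _.
rewrite /Am_neighbour; case: eqP => [->|_] /=; first by rewrite !addr0.
by case: eqP => [->|_] /=; rewrite ?add0r ?addr0.
Qed.

Lemma Tchari_Ym_self j a : T j (Ym j a) =
  \sum_k Am_neighbour j k (a * q ^+ d j) - Ym j (a * q ^+ d j * q ^+ d j).
Proof.
rewrite Tchari_Ym eqxx Am_neighbourE mulfK ?expf_neq0 //.
by rewrite opprB opprD addrCA addNKr.
Qed.

Hypothesis d_dichotomy :
  forall j, d j = lacing d \/ (d j = 1 /\ (lacing d = 2 \/ lacing d = 3))%N.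
Hypothesis d_simple_bond_long :
  forall j k, d j = lacing d -> C k j = -1 -> d k = lacing d.
Hypothesis d_multiple_bond_short : forall j k, C k j <= -2 ->
  [/\ d k = 1%N, d j = lacing d & (lacing d)%:Z = - C k j].

Lemma Wm_long k c : d k = lacing d -> Wm k c = Ym k c.
Proof. by move=> dk; rewrite /Defs.Wm dk eqxx. Qed.

Lemma Wm_short2 k c : d k = 1%N -> lacing d = 2%N -> Wm k c = Ym k (c / q) + Ym k (c * q).
Proof. by move=> dk l2; rewrite /Defs.Wm dk l2. Qed.

Lemma Wm_short3 k c : d k = 1%N -> lacing d = 3%N ->
  Wm k c = Ym k (c / q ^+ 2) + Ym k c + Ym k (c * q ^+ 2).
Proof. by move=> dk l3; rewrite /Defs.Wm dk l3. Qed.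

Lemma Am_neighbour_short_eq0 j k c : d j = 1%N -> lacing d != 1%N ->
  C k j != -1 -> Am_neighbour j k c = 0.
Proof.
move=> dj l1 Ckj; rewrite /Am_neighbour (negPf Ckj).
have no_multiple : ~ C k j <= -2 by move/d_multiple_bond_short => [_ dj' _]; lia.
by case: eqP => [Ckj2|_]; [|case: eqP => [Ckj3|//]]; case: no_multiple; rewrite ?Ckj2 ?Ckj3.
Qed.

Lemma W_laurent_Am_neighbour_long j k c : d j = lacing d -> c != 0 ->
  W_laurent (Am_neighbour j k c).
Proof.
move=> dj c_neq0; rewrite /Am_neighbour.
case: eqP => [Ckj|_].
  by rewrite -(Wm_long _ (d_simple_bond_long dj Ckj)); exact: W_laurent_Wm.
case: eqP => [Ckj|_].
  have Ckj_le : C k j <= -2 by rewrite Ckj.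
  have [dk _ l2] := d_multiple_bond_short Ckj_le.
  by rewrite -Wm_short2 //; [exact: W_laurent_Wm|rewrite Ckj in l2; lia].
case: eqP => [Ckj|_]; last exact: W_laurent0.
have Ckj_le : C k j <= -2 by rewrite Ckj.
have [dk _ l3] := d_multiple_bond_short Ckj_le.
by rewrite -Wm_short3 //; [exact: W_laurent_Wm|rewrite Ckj in l3; lia].
Qed.

Lemma W_laurent_Am_neighbour_short2 j k b : d j = 1%N -> lacing d = 2%N -> b != 0 ->
  W_laurent (Am_neighbour j k b + Am_neighbour j k (b * q ^+ 2)).
Proof.
move=> dj l2 b_neq0; have [Ckj|Ckj] := eqVneq (C k j) (-1); last first.
  by rewrite !Am_neighbour_short_eq0 ?l2 ?addr0 //; exact: W_laurent0.
rewrite /Am_neighbour Ckj eqxx.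
case: (d_dichotomy k) => [dk|[dk _]].
  rewrite -!Wm_long //; apply: W_laurentD;
    by apply: W_laurent_Wm; rewrite ?mulf_neq0 ?expf_neq0.
have -> : Ym k b + Ym k (b * q ^+ 2) = Wm k (b * q).
  by rewrite Wm_short2 // mulfK // -mulrA -expr2.
by apply: W_laurent_Wm; rewrite mulf_neq0.
Qed.

Lemma W_laurent_Am_neighbour_short3 j k b : d j = 1%N -> lacing d = 3%N -> b != 0 ->
  W_laurent (Am_neighbour j k (b / q) + Am_neighbour j k (b * q)
             + Am_neighbour j k (b * q ^+ 3)).
Proof.
move=> dj l3 b_neq0; have [Ckj|Ckj] := eqVneq (C k j) (-1); last first.
  by rewrite !Am_neighbour_short_eq0 ?l3 ?addr0 //; exact: W_laurent0.
rewrite /Am_neighbour Ckj eqxx.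
case: (d_dichotomy k) => [dk|[dk _]].
  by rewrite -!Wm_long //; do 2?apply: W_laurentD; apply: W_laurent_Wm;
    rewrite ?mulf_neq0 ?invr_neq0 ?expf_neq0.
have -> : Ym k (b / q) + Ym k (b * q) + Ym k (b * q ^+ 3) = Wm k (b * q).
  by rewrite Wm_short3 //; congr (Ym k _ + _ + Ym k _); field.
by apply: W_laurent_Wm; rewrite mulf_neq0.
Qed.

Lemma W_laurent_Tchari_Wm_long j b : d j = lacing d -> b != 0 -> W_laurent (T j (Wm j b)).
Proof.
move=> dj b_neq0; rewrite Wm_long // Tchari_Ym_self -Wm_long //.
apply: W_laurentB; last by apply: W_laurent_Wm; rewrite !mulf_neq0 ?expf_neq0.
apply: W_laurent_sum => k _.
by apply: W_laurent_Am_neighbour_long; rewrite ?mulf_neq0 ?expf_neq0.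
Qed.

Lemma W_laurent_Tchari_Wm_short2 j b : d j = 1%N -> lacing d = 2%N -> b != 0 ->
  W_laurent (T j (Wm j b)).
Proof.
move=> dj l2 b_neq0; rewrite Wm_short2 // TchariD !Tchari_Ym_self dj expr1.
rewrite divfK // -(mulrA b q q) -expr2 addrACA -opprD -big_split /=.
apply: W_laurentB; first by apply: W_laurent_sum => k _; exact: W_laurent_Am_neighbour_short2.
have -> : Ym j (b * q) + Ym j (b * q ^+ 2 * q) = Wm j (b * q ^+ 2).
  by rewrite Wm_short2 // expr2 mulrA mulfK.
by apply: W_laurent_Wm; rewrite mulf_neq0 ?expf_neq0.
Qed.

Lemma W_laurent_Tchari_Wm_short3 j b : d j = 1%N -> lacing d = 3%N -> b != 0 ->
  W_laurent (T j (Wm j b)).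
Proof.
move=> dj l3 b_neq0; rewrite Wm_short3 // !TchariD !Tchari_Ym_self dj expr1.
have -> : b / q ^+ 2 * q = b / q by field.
have -> : b * q ^+ 2 * q = b * q ^+ 3 by rewrite -mulrA -exprSr.
rewrite [X in X + _]addrACA -opprD addrACA -opprD -!big_split /=.
apply: W_laurentB; first by apply: W_laurent_sum => k _; exact: W_laurent_Am_neighbour_short3.
have -> : Ym j (b / q * q) + Ym j (b * q * q) + Ym j (b * q ^+ 3 * q) = Wm j (b * q ^+ 2).
  by rewrite Wm_short3 //; congr (Ym j _ + Ym j _ + Ym j _); field.
by apply: W_laurent_Wm; rewrite mulf_neq0 ?expf_neq0.
Qed.

Lemma W_laurent_Tchari j m : W_laurent m -> W_laurent (T j m).
Proof.
apply: W_laurent_Tchari_of_Wm => k b b_neq0.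
have [->|kj] := eqVneq k j; last by rewrite Tchari_Wm_id //; exact: W_laurent_Wm.
case: (d_dichotomy j) => [dj|[dj [l2|l3]]].
- exact: W_laurent_Tchari_Wm_long.
- exact: W_laurent_Tchari_Wm_short2.
- exact: W_laurent_Tchari_Wm_short3.
Qed.

Lemma W_laurent_Tword s m : W_laurent m -> W_laurent (Tword C d q s m).
Proof. by elim: s => [//|j s IH] /= /IH; exact: W_laurent_Tchari. Qed.
End ChariOperators.

Lemma cartan_form_gt0_int n (C : 'M[int]_n) (d : 'I_n -> nat) :
  (forall x : 'I_n -> rat, (exists i, x i != 0) ->
     0 < \sum_(i < n) \sum_(j < n) x i * ((d i)%:R * (C i j)%:~R) * x j) ->
  forall z : 'I_n -> int, (exists i, z i != 0) -> 0 < cartan_form C d z.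
Proof.
move=> posdef z [i zi]; rewrite -(ltr0z rat) rmorph_sum.
have -> : \sum_i ((\sum_l z i * ((d i)%:Z * C i l) * z l)%:~R : rat) =
    \sum_(i < n) \sum_(j < n) (z i)%:~R * ((d i)%:R * (C i j)%:~R) * (z j)%:~R.
  apply: eq_bigr => i' _; rewrite rmorph_sum; apply: eq_bigr => j _.
  by rewrite !rmorphM /= pmulrn.
by apply: posdef; exists i; rewrite intr_eq0.
Qed.

Theorem mainTheorem2 (R : realType) (n : nat) (C : 'M[int]_n) (d : 'I_n -> nat)
    (q : R[i]) :
  simple_cartan C d ->
  q != 0 -> (forall m : nat, (0 < m)%N -> q ^+ m != 1) ->
  forall i : 'I_n, (exists k : 'I_n, C k i < -1) ->
  forall s : seq 'I_n, reduced_word C s ->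
    W_laurent d q (Tword C d q s (Ym i 1)).
Proof.
move=> [_ [C_diag [C_offdiag [C_eq0_sym [d_gt0 [d_sym [d_gcd [posdef C_indec]]]]]]]].
move=> q_neq0 _ i [k Cki_lt] s _.
have form_gt0 := cartan_form_gt0_int posdef.
have multiple_short := multiple_bond_short C_diag C_offdiag d_gt0 form_gt0 C_eq0_sym d_sym
  C_indec d_gcd.
have Cki_le : C k i <= -2 by lia.
have [_ di _] := multiple_short i k Cki_le.
apply: (W_laurent_Tword q_neq0 _ (simple_bond_long C_diag C_offdiag C_eq0_sym d_sym)
  multiple_short).
  exact: lacing_dichotomy C_diag C_offdiag d_gt0 form_gt0 C_eq0_sym d_sym C_indec d_gcd.
by rewrite -(Wm_long q 1 di); apply: W_laurent_Wm; exact: oner_neq0.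
Qed.
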